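(* Let $I=\{1,\dots,m\}$, $J=\{1,\dots,n\}$, let $b\in\mathbb{R}^m$, let $\hat{x}\in\mathbb{R}^n$ with $\hat{x}\neq 0$, let $\hat{a}_i\in\mathbb{R}^n$ ($i\in I$) be given prior vectors, let $\xi\in\mathbb{R}^m$ be a vector of real-valued weights, and let $\|\cdot\|$ be a norm on $\mathbb{R}^n$. Consider the problem NLO-SD: \[ \min_{A,c,\pi}\ \sum_{i\in I}\xi_i\|a_i-\hat{a}_i\| \] subject to $\sum_{j\in J}c_j\hat{x}_j-\sum_{i\in I}b_i\pi_i=0$; $\sum_{j\in J}a_{ij}\hat{x}_j\ge b_i$ for all $i\in I$; $\sum_{i\in I}\pi_i=1$; $\sum_{i\in I}a_{ij}\pi_i=c_j$ for all $j\in J$; $\pi_i\ge0$ for all $i\in I$. Let $\|\hat{x}\|^*=\max_{\|v\|=1}\hat{x}^\top v$ be the dual norm and let $v(\hat{x})\in\arg\max_{\|v\|=1}\hat{x}^\top v$. For each $i\in I$ define \[ f_i=\frac{\xi_i|\hat{a}_i^\top\hat{x}-b_i|}{\|\hat{x}\|^*},\qquad a^f_i=\hat{a}_i-\frac{\hat{a}_i^\top\hat{x}-b_i}{\|\hat{x}\|^*}v(\hat{x}), \] $g_i=f_i$ and $a^g_i=a^f_i$ if $\hat{a}_i^\top\hat{x}<b_i$, and $g_i=0$ and $a^g_i=\hat{a}_i$ otherwise. Let $i^*\in\arg\min_{i\in I}\{f_i-g_i\}$. Then the optimal value of NLO-SD is $f_{i^*}+\sum_{i\in I\setminus\{i^*\}}g_i$,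 and an optimal solution $(A,c,\pi)$ is given by $a_{i^*}=a^f_{i^*}$, $a_i=a^g_i$ for $i\in I\setminus\{i^*\}$, $c=a_{i^*}$, $\pi=e_{i^*}$. Moreover, if $b_i\neq0$ and $\hat{a}_i\neq0$ for all $i\in I$, then this solution satisfies $c\neq0$ and $a_i\neq0$ for all $i\in I$.
   Context: $a_i$ denotes the $i$-th row of $A=(a_{ij})\in\mathbb{R}^{m\times n}$, $c\in\mathbb{R}^n$, $\pi\in\mathbb{R}^m$, and $e_i$ denotes the $i$-th unit vector of $\mathbb{R}^m$. *)

From HB Require Import structures.
From mathcomp Require Import all_boot all_order all_algebra.
Set Implicit Arguments. Unset Strict Implicit. Unset Printing Implicit Defensive.
Import Order.TTheory GRing.Theory Num.Theory.
Local Open Scope ring_scope.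

Section NLOSD.
Variables (R : realFieldType) (m n : nat).

Definition dotv (u v : 'rV[R]_n) : R := \sum_(j < n) u 0 j * v 0 j.

Definition is_norm (N : 'rV[R]_n -> R) : Prop :=
  [/\ forall x, N x = 0 -> x = 0,
      forall (a : R) x, N (a *: x) = `|a| * N x
    & forall x y, N (x + y) <= N x + N y].

Definition is_dual_argmax (N : 'rV[R]_n -> R) (xhat v : 'rV[R]_n) : Prop :=
  N v = 1 /\ forall w, N w = 1 -> dotv xhat w <= dotv xhat v.

(* the dual norm value ||xhat||^* = max_{||w||=1} xhat^T w, given the maximizer v *)
Definition dualnorm_at (xhat v : 'rV[R]_n) : R := dotv xhat v.

Definition nlosd_feasible (b : 'I_m -> R) (xhat : 'rV[R]_n)
  (A : 'M[R]_(m, n)) (c : 'rV[R]_n) (pi : 'I_m -> R) : Prop :=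
  [/\ \sum_(j < n) c 0 j * xhat 0 j - \sum_(i < m) b i * pi i = 0,
      forall i : 'I_m, \sum_(j < n) A i j * xhat 0 j >= b i,
      \sum_(i < m) pi i = 1,
      forall j : 'I_n, \sum_(i < m) A i j * pi i = c 0 j
    & forall i : 'I_m, 0 <= pi i].

Definition nlosd_obj (N : 'rV[R]_n -> R) (xi : 'I_m -> R) (Ahat A : 'M[R]_(m, n)) : R :=
  \sum_(i < m) xi i * N (row i A - row i Ahat).

Definition f_val (xi b : 'I_m -> R) (Ahat : 'M[R]_(m, n)) (xhat v : 'rV[R]_n) (i : 'I_m) : R :=
  xi i * `|dotv (row i Ahat) xhat - b i| / dualnorm_at xhat v.

Definition a_f (b : 'I_m -> R) (Ahat : 'M[R]_(m, n)) (xhat v : 'rV[R]_n) (i : 'I_m) : 'rV[R]_n :=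
  row i Ahat - ((dotv (row i Ahat) xhat - b i) / dualnorm_at xhat v) *: v.

Definition g_val (xi b : 'I_m -> R) (Ahat : 'M[R]_(m, n)) (xhat v : 'rV[R]_n) (i : 'I_m) : R :=
  if dotv (row i Ahat) xhat < b i then f_val xi b Ahat xhat v i else 0.

Definition a_g (b : 'I_m -> R) (Ahat : 'M[R]_(m, n)) (xhat v : 'rV[R]_n) (i : 'I_m) : 'rV[R]_n :=
  if dotv (row i Ahat) xhat < b i then a_f b Ahat xhat v i else row i Ahat.

Definition A_star (b : 'I_m -> R) (Ahat : 'M[R]_(m, n)) (xhat v : 'rV[R]_n) (istar : 'I_m)
  : 'M[R]_(m, n) :=
  \matrix_(i < m) (if i == istar then a_f b Ahat xhat v i else a_g b Ahat xhat v i).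

Definition pi_star (istar : 'I_m) : 'I_m -> R := fun i => (i == istar)%:R.

End NLOSD.

From HB Require Import structures.
From mathcomp Require Import all_boot all_order all_algebra.
From mathcomp Require Import ring lra.
Set Implicit Arguments. Unset Strict Implicit. Unset Printing Implicit Defensive.
Import Order.TTheory GRing.Theory Num.Theory.
Local Open Scope ring_scope.

(* By Hoelder's inequality x^T (z - a) <= ||x||^* N (z - a), moving a row a to
   the hyperplane x^T z = beta costs at least |x^T a - beta| / ||x||^*, and
   moving it along the maximizer v attains this bound; moving it into the
   half-space x^T z >= beta costs nothing if it is already there.  If
   (A, c, pi) is feasible, then sum_i pi_i (a_i^T x - b_i) = c^T x - b^T pi = 0
   with nonnegative terms, so some row k is tight.  The objective is then at
   least f_k + sum_{i <> k} g_i, which is minimized at k = i*, and the proposed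
   solution attains that value. *)

Section Norm.
Variables (R : realFieldType) (n : nat) (N : 'rV[R]_n -> R).
Hypothesis N_norm : is_norm N.

Lemma isnorm0 : N 0 = 0.
Proof. by case: N_norm => _ normZ _; rewrite -(scale0r 0) normZ normr0 mul0r. Qed.

Lemma isnormN x : N (- x) = N x.
Proof. by case: N_norm => _ normZ _; rewrite -scaleN1r normZ normrN normr1 mul1r. Qed.

Lemma isnorm_ge0 x : 0 <= N x.
Proof.
case: N_norm => _ _ normD; have := normD x (- x).
by rewrite subrr isnorm0 isnormN; lra.
Qed.

Lemma isnorm_gt0 x : x != 0 -> 0 < N x.
Proof.
case: N_norm => normx0 _ _ x_neq0; rewrite lt_def isnorm_ge0 andbT.
by apply: contra x_neq0 => /eqP/normx0 ->.
Qed.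

End Norm.

Section Dot.
Variables (R : realFieldType) (n : nat).
Implicit Types (u w x : 'rV[R]_n) (a : R).

Lemma dotvC u w : dotv u w = dotv w u.
Proof. by apply: eq_bigr => j _; rewrite mulrC. Qed.

Lemma dotvBl u w x : dotv (u - w) x = dotv u x - dotv w x.
Proof. by rewrite /dotv -sumrB; apply: eq_bigr => j _; rewrite !mxE mulrBl. Qed.

Lemma dotvZl a u x : dotv (a *: u) x = a * dotv u x.
Proof. by rewrite /dotv mulr_sumr; apply: eq_bigr => j _; rewrite !mxE mulrA. Qed.

Lemma dotvZr a u x : dotv x (a *: u) = a * dotv x u.
Proof. by rewrite dotvC dotvZl dotvC. Qed.

Lemma dotvNr u x : dotv x (- u) = - dotv x u.
Proof. by rewrite -scaleN1r dotvZr mulN1r. Qed.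

Lemma dotv0l x : dotv 0 x = 0.
Proof. by rewrite /dotv big1 // => j _; rewrite mxE mul0r. Qed.

Lemma dotv_neq0l u x : dotv u x != 0 -> u != 0.
Proof. by apply: contra => /eqP ->; rewrite dotv0l. Qed.

Lemma dotvv_gt0 x : x != 0 -> 0 < dotv x x.
Proof.
move=> x_neq0; have sq_ge0 j : true -> 0 <= x 0 j * x 0 j by rewrite -expr2 sqr_ge0.
rewrite lt_def sumr_ge0 ?andbT //; apply: contra x_neq0 => /eqP /(psumr_eq0P sq_ge0) x0.
by apply/eqP/rowP => j; rewrite mxE; apply/eqP; rewrite -sqrf_eq0 expr2 x0.
Qed.

Lemma sum_row_dotv (m : nat) (A : 'M[R]_(m, n)) x i :
  \sum_(j < n) A i j * x 0 j = dotv (row i A) x.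
Proof. by apply: eq_bigr => j _; rewrite mxE. Qed.

End Dot.

Section DualNorm.
Variables (R : realFieldType) (n : nat) (N : 'rV[R]_n -> R) (xhat v : 'rV[R]_n).
Hypotheses (N_norm : is_norm N) (v_argmax : is_dual_argmax N xhat v).
Local Notation d := (dualnorm_at xhat v).

Lemma dotv_le_dualnorm y : dotv xhat y <= d * N y.
Proof.
case: v_argmax => _ v_max; have [->|y_neq0] := eqVneq y 0.
  by rewrite dotvC dotv0l isnorm0 // mulr0.
have Ny_gt0 := isnorm_gt0 N_norm y_neq0.
have unit_y : N ((N y)^-1 *: y) = 1.
  case: N_norm => _ normZ _.
  by rewrite normZ ger0_norm ?invr_ge0 ?ltW // mulVf ?gt_eqF.
by have := v_max _ unit_y; rewrite dotvZr ler_pdivrMl // mulrC.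
Qed.

Lemma abs_dotv_le_dualnorm y : `|dotv xhat y| <= d * N y.
Proof.
have := dotv_le_dualnorm (- y); rewrite dotvNr isnormN //.
by rewrite ler_norml dotv_le_dualnorm andbT; lra.
Qed.

Lemma dualnorm_gt0 : xhat != 0 -> 0 < d.
Proof.
move=> xhat_neq0; rewrite -(pmulr_lgt0 _ (isnorm_gt0 N_norm xhat_neq0)).
exact: lt_le_trans (dotvv_gt0 xhat_neq0) (dotv_le_dualnorm xhat).
Qed.

Lemma dist_dotv_le a z : `|dotv z xhat - dotv a xhat| <= d * N (z - a).
Proof. by rewrite -dotvBl dotvC abs_dotv_le_dualnorm. Qed.

Lemma dist_hyperplane_le a beta z :
  dotv z xhat = beta -> `|dotv a xhat - beta| / d <= N (z - a).
Proof.
move=> <-; have [d_gt0|d_le0] := ltP 0 d.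
  by rewrite ler_pdivrMr // mulrC distrC dist_dotv_le.
by apply: le_trans (isnorm_ge0 N_norm _); rewrite mulr_ge0_le0 ?invr_le0.
Qed.

Lemma dist_halfspace_le a beta z : dotv a xhat < beta -> beta <= dotv z xhat ->
  `|dotv a xhat - beta| / d <= N (z - a).
Proof.
move=> a_below z_above; have [d_gt0|d_le0] := ltP 0 d.
  rewrite ler_pdivrMr // mulrC; apply: le_trans (dist_dotv_le a z).
  by rewrite ltr0_norm ?subr_lt0 // (le_trans _ (ler_norm _)) //; lra.
by apply: le_trans (isnorm_ge0 N_norm _); rewrite mulr_ge0_le0 ?invr_le0.
Qed.

Definition hyperplane_proj (a : 'rV[R]_n) (beta : R) : 'rV[R]_n :=
  a - ((dotv a xhat - beta) / d) *: v.

Hypothesis xhat_neq0 : xhat != 0.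

Lemma dotv_hyperplane_proj a beta : dotv (hyperplane_proj a beta) xhat = beta.
Proof.
have d_neq0 : d != 0 by rewrite gt_eqF ?dualnorm_gt0.
by rewrite dotvBl dotvZl (dotvC v) -/d mulfVK // opprB addrC subrK.
Qed.

Lemma isnorm_hyperplane_proj_sub a beta :
  N (hyperplane_proj a beta - a) = `|dotv a xhat - beta| / d.
Proof.
case: N_norm => _ normZ _; case: v_argmax => Nv1 _.
rewrite addrAC subrr add0r isnormN // normZ Nv1 mulr1.
by rewrite normrM normfV (gtr0_norm (dualnorm_gt0 xhat_neq0)).
Qed.

End DualNorm.

Section FiniteSums.
Variables (R : realFieldType) (I : finType).

Lemma sum_but_le_argmin (F G : I -> R) (s k : I) :
    (forall i, F s - G s <= F i - G i) ->
  F s + \sum_(i | i != s) G i <= F k + \sum_(i | i != k) G i.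
Proof.
move=> s_min; have sum_but j : \sum_(i | i != j) G i = \sum_i G i - G j.
  by rewrite [\sum_i G i](bigD1 j) //=; ring.
by rewrite !sum_but; have := s_min k; lra.
Qed.

Lemma exists_zero_on_support (p r : I -> R) :
    (forall i, 0 <= p i) -> (forall i, 0 <= r i) ->
    \sum_i p i = 1 -> \sum_i p i * r i = 0 ->
  exists k, r k = 0.
Proof.
move=> p_ge0 r_ge0 p_sum1 pr_sum0.
have [k pk_neq0] : exists k, p k != 0.
  apply/existsP/contraT; rewrite negb_exists => /forallP p0; move/eqP: p_sum1.
  by rewrite big1 => [|i _]; [rewrite eq_sym oner_eq0 | apply/eqP/negbNE/p0].
have /(psumr_eq0P (fun i _ => mulr_ge0 (p_ge0 i) (r_ge0 i))) pr0 := pr_sum0.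
by exists k; apply/eqP; move/eqP: (pr0 k isT); rewrite mulf_eq0 (negbTE pk_neq0).
Qed.

End FiniteSums.

Section NLOSD.
Variables (R : realFieldType) (m n : nat) (N : 'rV[R]_n -> R) (xhat v : 'rV[R]_n).
Hypotheses (N_norm : is_norm N) (v_argmax : is_dual_argmax N xhat v).
Hypothesis xhat_neq0 : xhat != 0.
Variables (b xi : 'I_m -> R) (Ahat : 'M[R]_(m, n)) (s : 'I_m).
Hypothesis xi_ge0 : forall i, 0 <= xi i.
Local Notation d := (dualnorm_at xhat v).
Local Notation f := (f_val xi b Ahat xhat v).
Local Notation g := (g_val xi b Ahat xhat v).
Local Notation af := (a_f b Ahat xhat v).
Local Notation ag := (a_g b Ahat xhat v).
Local Notation Astar := (A_star b Ahat xhat v s).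

Lemma a_fE i : af i = hyperplane_proj xhat v (row i Ahat) (b i).
Proof. by []. Qed.

Lemma f_valE i : f i = xi i * (`|dotv (row i Ahat) xhat - b i| / d).
Proof. by rewrite /f_val mulrA. Qed.

Lemma dotv_a_f i : dotv (af i) xhat = b i.
Proof. by rewrite a_fE (dotv_hyperplane_proj N_norm). Qed.

Lemma dotv_a_g_ge i : b i <= dotv (ag i) xhat.
Proof. by rewrite /a_g; case: ltP => [_|//]; rewrite dotv_a_f. Qed.

Lemma cost_a_f i : xi i * N (af i - row i Ahat) = f i.
Proof. by rewrite a_fE (isnorm_hyperplane_proj_sub N_norm) // f_valE. Qed.

Lemma cost_a_g i : xi i * N (ag i - row i Ahat) = g i.
Proof.
by rewrite /a_g /g_val; case: ifP => _; rewrite ?cost_a_f // subrr isnorm0 ?mulr0.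
Qed.

Lemma f_val_le_cost i z : dotv z xhat = b i -> f i <= xi i * N (z - row i Ahat).
Proof. by move=> z_on; rewrite f_valE ler_wpM2l ?(dist_hyperplane_le N_norm). Qed.

Lemma g_val_le_cost i z : b i <= dotv z xhat -> g i <= xi i * N (z - row i Ahat).
Proof.
move=> z_above; rewrite /g_val; case: ifP => [a_below|_].
  by rewrite f_valE ler_wpM2l ?(dist_halfspace_le N_norm).
by rewrite mulr_ge0 ?(isnorm_ge0 N_norm).
Qed.

Lemma a_f_neq0 i : b i != 0 -> af i != 0.
Proof. by move=> bi_neq0; apply: (dotv_neq0l (x := xhat)); rewrite dotv_a_f. Qed.

Lemma a_g_neq0 i : b i != 0 -> row i Ahat != 0 -> ag i != 0.
Proof. by move=> bi_neq0 ai_neq0; rewrite /a_g; case: ifP => // _; apply: a_f_neq0. Qed.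

Lemma nlosd_feasible_tight A c pi :
  nlosd_feasible b xhat A c pi -> exists k, dotv (row k A) xhat = b k.
Proof.
case=> c_bal A_ge pi_sum1 c_comb pi_ge0.
have slack_ge0 i : 0 <= dotv (row i A) xhat - b i by rewrite subr_ge0 -sum_row_dotv.
have slack_sum0 : \sum_i pi i * (dotv (row i A) xhat - b i) = 0.
  apply: etrans c_bal; under eq_bigr do rewrite mulrBr.
  rewrite sumrB; congr (_ - _); last by apply: eq_bigr => i _; rewrite mulrC.
  rewrite /dotv; under eq_bigr do rewrite mulr_sumr.
  rewrite exchange_big; apply: eq_bigr => j _; rewrite -c_comb mulr_suml.
  by apply: eq_bigr => i _; rewrite mxE mulrA (mulrC (pi i)).
have [k /subr0_eq] := exists_zero_on_support pi_ge0 slack_ge0 pi_sum1 slack_sum0.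
by exists k.
Qed.

Lemma sum_mul_pi_star (F : 'I_m -> R) : \sum_i F i * pi_star R s i = F s.
Proof.
rewrite (bigD1 s) //= /pi_star eqxx mulr1 big1 ?addr0 // => i /negbTE i_neq_s.
by rewrite i_neq_s mulr0.
Qed.

Lemma row_A_star i : row i Astar = if i == s then af i else ag i.
Proof. exact: rowK. Qed.

Lemma A_star_feasible : nlosd_feasible b xhat Astar (af s) (pi_star R s).
Proof.
split.
- by rewrite (sum_mul_pi_star b) -/(dotv _ _) dotv_a_f subrr.
- move=> i; rewrite sum_row_dotv row_A_star.
  by case: ifP => _; rewrite ?dotv_a_f ?dotv_a_g_ge.
- rewrite -[RHS](sum_mul_pi_star (fun=> 1)).
  by apply: eq_bigr => i _; rewrite mul1r.
- by move=> j; rewrite sum_mul_pi_star mxE eqxx.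
- by move=> i; rewrite ler0n.
Qed.

Lemma nlosd_obj_A_star : nlosd_obj N xi Ahat Astar = f s + \sum_(i | i != s) g i.
Proof.
rewrite /nlosd_obj (bigD1 s) //= row_A_star eqxx cost_a_f //.
congr (_ + _); apply: eq_bigr => i /negbTE i_neq_s.
by rewrite row_A_star i_neq_s cost_a_g.
Qed.

Lemma nlosd_obj_ge (A : 'M[R]_(m, n)) c pi :
    (forall i, f s - g s <= f i - g i) -> nlosd_feasible b xhat A c pi ->
  f s + \sum_(i | i != s) g i <= nlosd_obj N xi Ahat A.
Proof.
move=> s_min feasA; have [k tight] := nlosd_feasible_tight feasA.
have [_ A_ge _ _ _] := feasA.
apply: le_trans (sum_but_le_argmin k s_min) _.
rewrite /nlosd_obj [leRHS](bigD1 k) //=; apply: lerD; first exact: f_val_le_cost.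
by apply: ler_sum => i _; apply: g_val_le_cost; rewrite -sum_row_dotv; apply: A_ge.
Qed.

Lemma A_star_rows_neq0 :
  (forall i, b i != 0) -> (forall i, row i Ahat != 0) -> forall i, row i Astar != 0.
Proof.
move=> b_neq0 Ahat_neq0 i; rewrite row_A_star.
by case: ifP => _; [apply: a_f_neq0 | apply: a_g_neq0].
Qed.

End NLOSD.

Theorem theorem2 (R : realFieldType) (m n : nat)
  (b xi : 'I_m -> R) (xhat : 'rV[R]_n) (Ahat : 'M[R]_(m, n))
  (N : 'rV[R]_n -> R) (v : 'rV[R]_n) (istar : 'I_m) :
  is_norm N ->
  xhat != 0 ->
  (forall i, 0 <= xi i) ->
  is_dual_argmax N xhat v ->
  (forall i, f_val xi b Ahat xhat v istar - g_val xi b Ahat xhat v istar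
             <= f_val xi b Ahat xhat v i - g_val xi b Ahat xhat v i) ->
  let V := f_val xi b Ahat xhat v istar
           + \sum_(i < m | i != istar) g_val xi b Ahat xhat v i in
  let Astar := A_star b Ahat xhat v istar in
  let cstar := a_f b Ahat xhat v istar in
  [/\ nlosd_feasible b xhat Astar cstar (pi_star R istar),
      nlosd_obj N xi Ahat Astar = V,
      (forall A c pi, nlosd_feasible b xhat A c pi -> V <= nlosd_obj N xi Ahat A)
    & ((forall i, b i != 0) -> (forall i, row i Ahat != 0) ->
       cstar != 0 /\ forall i, row i Astar != 0)].
Proof.
move=> N_norm xhat_neq0 xi_ge0 v_argmax istar_min /=; split.
- exact: (A_star_feasible N_norm v_argmax xhat_neq0 b Ahat istar).
- exact: nlosd_obj_A_star.
- by move=> A c pi; apply: nlosd_obj_ge.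
- move=> b_neq0 Ahat_neq0; split.
    exact: (a_f_neq0 N_norm v_argmax xhat_neq0 Ahat (b_neq0 istar)).
  exact: (A_star_rows_neq0 N_norm v_argmax xhat_neq0 istar b_neq0 Ahat_neq0).
Qed.
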